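(* For each $\eta\in(0,\pi/3)$ and each integer $n\ge0$, $\angle b_0z_0z_1=\angle z_nz_{n+1}z_{n+2}=\angle w_nw_{n+1}w_{n+2}=\pi-\eta$.
   Context: Let $a=\frac{e^{-i\eta}}{2\cos\eta}$, $c=\frac{1}{1-|a|^4}$, and for integers $j\ge0$ put $z_j=ca^{j+1}$, $w_j=1-c|a|^2a^j$, $b_0=a+c|a|^4$. For $u,v,w\in\mathbb{C}$, $\angle uvw=\arg\frac{w-v}{u-v}$ with $\arg$ taking values in $[0,2\pi)$. *)

From Stdlib Require Import Reals.
From Coquelicot Require Import Coquelicot.
Open Scope R_scope.

(* Principal argument with values in [0, 2*PI):
   for z = x + i y <> 0, arg z = acos (x/|z|) if y >= 0, else 2*PI - acos (x/|z|). *)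
Definition carg (z : C) : R :=
  if Rle_dec 0 (Im z) then acos (Re z / Cmod z)
  else 2 * PI - acos (Re z / Cmod z).

Definition cangle (u v w : C) : R := carg ((w - v) / (u - v))%C.

Definition cexpi (t : R) : C := (cos t, sin t).

Definition a_ (eta : R) : C := (cexpi (- eta) / RtoC (2 * cos eta))%C.
Definition c_ (eta : R) : R := 1 / (1 - (Cmod (a_ eta)) ^ 4).
Definition z_ (eta : R) (j : nat) : C := (RtoC (c_ eta) * Cpow (a_ eta) (S j))%C.
Definition w_ (eta : R) (j : nat) : C :=
  (1 - RtoC (c_ eta * (Cmod (a_ eta)) ^ 2) * Cpow (a_ eta) j)%C.
Definition b0_ (eta : R) : C := (a_ eta + RtoC (c_ eta * (Cmod (a_ eta)) ^ 4))%C.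

(* Each of the three angles is the argument of a ratio (w - v) / (u - v) that
   is a positive real multiple of -a.  For the progressions z_j = c a^(j+1)
   and w_j = 1 - c |a|^2 a^j the ratio is exactly -a; for the first angle,
   c (1 - |a|^4) = 1 gives b_0 - z_0 = c |a|^4 (1 - a), and the ratio is
   -a / |a|^4.  Finally -a = e^(i (pi - eta)) / (2 cos eta) has argument
   pi - eta as soon as cos eta > 0. *)

From Stdlib Require Import Reals Lra.
From Coquelicot Require Import Coquelicot.
Open Scope R_scope.

Lemma Cmod_cexpi (t : R) : Cmod (cexpi t) = 1.
Proof.
  unfold Cmod, cexpi; simpl fst; simpl snd.
  rewrite <- sqrt_1; f_equal.
  pose proof (sin2_cos2 t) as Hsc; unfold Rsqr in Hsc; lra.
Qed.

Lemma carg_cexpi (t : R) : 0 <= t < 2 * PI -> carg (cexpi t) = t.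
Proof.
  intros Ht; unfold carg; rewrite Cmod_cexpi; simpl Re; simpl Im.
  rewrite Rdiv_1_r.
  destruct (Rle_dec 0 (sin t)) as [Hs | Hs].
  - apply acos_cos; split; [lra |].
    destruct (Rle_dec t PI) as [Hle | Hgt]; [exact Hle |].
    pose proof (sin_lt_0 t); lra.
  - assert (Hpi : PI < t).
    { destruct (Rlt_dec PI t) as [Hlt | Hle]; [exact Hlt |].
      exfalso; apply Hs, sin_ge_0; lra. }
    replace (cos t) with (cos (2 * PI - t)).
    + rewrite acos_cos; lra.
    + rewrite cos_minus, cos_2PI, sin_2PI; ring.
Qed.

Lemma carg_scale (r : R) (z : C) : 0 < r -> carg (RtoC r * z) = carg z.
Proof.
  intros Hr; unfold carg.
  rewrite Cmod_mult, Cmod_R, Rabs_pos_eq by lra.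
  replace (Re (RtoC r * z)) with (r * Re z) by (unfold Re; simpl; ring).
  replace (Im (RtoC r * z)) with (r * Im z) by (unfold Im; simpl; ring).
  rewrite Rdiv_mult_l_l by lra.
  destruct (Rle_dec 0 (r * Im z)), (Rle_dec 0 (Im z)); try reflexivity;
    exfalso; nra.
Qed.

Lemma cangle_ratio (u v w q : C) :
  u <> v -> (w - v = q * (u - v))%C -> cangle u v w = carg q.
Proof.
  intros Huv Hq; unfold cangle; rewrite Hq; f_equal.
  field; intros E; apply Huv.
  replace u with (u - v + v)%C by ring; rewrite E; ring.
Qed.

Lemma cangle_geometric (f : nat -> C) (p q a : C) (n : nat) :
  (forall j, f j = p + q * a ^ j)%C -> q <> 0%C -> a <> 0%C -> a <> 1%C ->
  cangle (f n) (f (S n)) (f (S (S n))) = carg (- a).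
Proof.
  intros Hf Hq Ha Ha1; rewrite !Hf.
  apply cangle_ratio; [| rewrite !Cpow_S; ring].
  intros E; apply Ceq_minus in E; revert E.
  replace (p + q * a ^ n - (p + q * a ^ S n))%C with (q * a ^ n * (1 - a))%C
    by (rewrite Cpow_S; ring).
  apply Cmult_neq_0; [apply Cmult_neq_0, Cpow_nz; assumption |].
  apply Cminus_eq_contra; intros E; apply Ha1; symmetry; exact E.
Qed.

Lemma RtoC_neq_0 (r : R) : r <> 0 -> RtoC r <> 0%C.
Proof. intros Hr E; apply Hr; exact (f_equal fst E). Qed.

Lemma Copp_a_polar (eta : R) :
  cos eta <> 0 -> (- a_ eta = RtoC (/ (2 * cos eta)) * cexpi (PI - eta))%C.
Proof.
  intros Hcos; unfold a_, cexpi.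
  rewrite cos_neg, sin_neg, cos_minus, sin_minus, cos_PI, sin_PI.
  apply injective_projections; simpl; field; lra.
Qed.

Lemma carg_Copp_a (eta : R) : 0 < eta < PI / 2 -> carg (- a_ eta) = PI - eta.
Proof.
  intros Heta.
  assert (Hcos : 0 < cos eta) by (apply cos_gt_0; lra).
  rewrite Copp_a_polar by lra.
  rewrite carg_scale, carg_cexpi; [reflexivity | lra |].
  apply Rinv_0_lt_compat; lra.
Qed.

Lemma Cmod_a (eta : R) : 0 < cos eta -> Cmod (a_ eta) = / (2 * cos eta).
Proof.
  intros Hcos; unfold a_.
  rewrite Cmod_div, Cmod_cexpi, Cmod_R, Rabs_pos_eq by (try apply RtoC_neq_0; lra).
  field; lra.
Qed.

Lemma Cmod_a_bounds (eta : R) : 0 < eta < PI / 3 -> 0 < Cmod (a_ eta) < 1.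
Proof.
  intros Heta.
  assert (Hcos : 1 / 2 < cos eta).
  { rewrite <- cos_PI3; apply cos_decreasing_1; pose proof PI_RGT_0; lra. }
  rewrite Cmod_a by lra; split.
  - apply Rinv_0_lt_compat; lra.
  - rewrite <- Rinv_1; apply Rinv_lt_contravar; lra.
Qed.

Section UnitDisc.

Variable eta : R.
Hypothesis Ha : 0 < Cmod (a_ eta) < 1.

Lemma Cmod_a_pow4_bounds : 0 < Cmod (a_ eta) ^ 4 < 1.
Proof.
  split; [apply pow_lt; lra |].
  apply (pow_lt_1_compat (Cmod (a_ eta)) 4); [lra | auto].
Qed.

Lemma a_neq_0 : a_ eta <> 0%C.
Proof. apply Cmod_gt_0; lra. Qed.

Lemma a_neq_1 : a_ eta <> 1%C.
Proof. intros E; rewrite E, Cmod_1 in Ha; lra. Qed.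

Lemma c_pos : 0 < c_ eta.
Proof. pose proof Cmod_a_pow4_bounds; unfold c_; apply Rdiv_lt_0_compat; lra. Qed.

Lemma cangle_z (n : nat) :
  cangle (z_ eta n) (z_ eta (S n)) (z_ eta (S (S n))) = carg (- a_ eta).
Proof.
  apply (cangle_geometric _ 0 (RtoC (c_ eta) * a_ eta));
    [| | exact a_neq_0 | exact a_neq_1].
  - intros j; unfold z_; rewrite Cpow_S; ring.
  - apply Cmult_neq_0; [apply RtoC_neq_0; pose proof c_pos; lra | exact a_neq_0].
Qed.

Lemma cangle_w (n : nat) :
  cangle (w_ eta n) (w_ eta (S n)) (w_ eta (S (S n))) = carg (- a_ eta).
Proof.
  apply (cangle_geometric _ 1 (- RtoC (c_ eta * Cmod (a_ eta) ^ 2)));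
    [| | exact a_neq_0 | exact a_neq_1].
  - intros j; unfold w_; ring.
  - rewrite <- RtoC_opp; apply RtoC_neq_0.
    pose proof c_pos; pose proof (pow_lt (Cmod (a_ eta)) 2); nra.
Qed.

Lemma b0_sub_z0 :
  (b0_ eta - z_ eta 0 = RtoC (c_ eta * Cmod (a_ eta) ^ 4) * (1 - a_ eta))%C.
Proof.
  pose proof Cmod_a_pow4_bounds.
  unfold b0_, z_, c_; rewrite Cpow_1_r.
  destruct (a_ eta) as [x y]; apply injective_projections; simpl; field; lra.
Qed.

Lemma cangle_b0 : cangle (b0_ eta) (z_ eta 0) (z_ eta 1) = carg (- a_ eta).
Proof.
  pose proof Cmod_a_pow4_bounds as Hm4.
  assert (Hm4_C : RtoC (Cmod (a_ eta) ^ 4) <> 0%C) by (apply RtoC_neq_0; lra).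
  rewrite <- (carg_scale (/ Cmod (a_ eta) ^ 4)) by (apply Rinv_0_lt_compat; lra).
  apply cangle_ratio.
  - intros E; apply Ceq_minus in E; rewrite b0_sub_z0 in E; revert E.
    apply Cmult_neq_0; [apply RtoC_neq_0; pose proof c_pos; nra |].
    apply Cminus_eq_contra; intros E; apply a_neq_1; symmetry; exact E.
  - rewrite b0_sub_z0; unfold z_; rewrite RtoC_mult, RtoC_inv by lra.
    simpl; field; exact Hm4_C.
Qed.

End UnitDisc.

Theorem lemma6p1 (eta : R) (n : nat) :
  0 < eta < PI / 3 ->
  cangle (b0_ eta) (z_ eta 0) (z_ eta 1) = PI - eta /\
  cangle (z_ eta n) (z_ eta (S n)) (z_ eta (S (S n))) = PI - eta /\
  cangle (w_ eta n) (w_ eta (S n)) (w_ eta (S (S n))) = PI - eta.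
Proof.
  intros Heta.
  pose proof (Cmod_a_bounds eta Heta) as Ha.
  rewrite (cangle_b0 eta Ha), (cangle_z eta Ha), (cangle_w eta Ha).
  rewrite carg_Copp_a by (pose proof PI_RGT_0; lra).
  repeat split.
Qed.
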